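(* Let $k\in\{2,\dots,N\}$ and suppose $J_k\le k-1$. Then for every $j$ with $J_k\le j\le k-1$, $$j\cdot h^+_{j+1,k}\ \ge\ \sum_{j'=1}^{j}h^+_{j',k}.$$
   Context: Fix $N\in\mathbb{N}$. A function $f:[0,1]\to\mathbb{R}$ is inverse S-shaped if it is strictly increasing, continuously differentiable, and there is $x_0\in[0,1]$ such that $f'$ is strictly decreasing on $[0,x_0]$ and strictly increasing on $[x_0,1]$. Let $W^+:[0,1]\to[0,1]$ be inverse S-shaped with $W^+(0)=0$, $W^+(1)=1$. For $k\in\{1,\dots,N\}$ and $j\in\{1,\dots,k\}$ let $h^+_{j,k}:=W^+\!\left(\frac{k-j+1}{N}\right)-W^+\!\left(\frac{k-j}{N}\right)$, and let $J_k:=\min\{j\in\{1,\dots,k\}: j\,h^+_{j+1,k}\ge\sum_{j'=1}^{j}h^+_{j',k}\}$ with $h^+_{k+1,k}:=\infty$. *)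

From Stdlib Require Import Reals Lra.
Open Scope R_scope.

Definition has_deriv_on01 (f df : R -> R) : Prop :=
  forall x, 0 <= x <= 1 ->
    limit1_in (fun y => (f y - f x) / (y - x))
              (fun y => 0 <= y <= 1 /\ y <> x) (df x) x.

Definition continuous_on01 (g : R -> R) : Prop :=
  forall x, 0 <= x <= 1 -> limit1_in g (fun y => 0 <= y <= 1) (g x) x.

Definition inverse_S_shaped (f : R -> R) : Prop :=
  (forall x y, 0 <= x -> x < y -> y <= 1 -> f x < f y) /\
  exists df : R -> R,
    has_deriv_on01 f df /\ continuous_on01 df /\
    exists x0, 0 <= x0 <= 1 /\
      (forall x y, 0 <= x -> x < y -> y <= x0 -> df y < df x) /\
      (forall x y, x0 <= x -> x < y -> y <= 1 -> df x < df y).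

Definition hplus (W : R -> R) (N k j : nat) : R :=
  W ((INR k - INR j + 1) / INR N) - W ((INR k - INR j) / INR N).

Fixpoint sum1 (f : nat -> R) (j : nat) : R :=
  match j with
  | O => 0
  | S j' => sum1 f j' + f (S j')
  end.

(* The defining condition of J_k at j, with h^+_{k+1,k} := +infinity
   (so the condition holds automatically at j = k). *)
Definition Jcond (W : R -> R) (N k j : nat) : Prop :=
  j = k \/ INR j * hplus W N k (S j) >= sum1 (hplus W N k) j.

Definition is_Jk (W : R -> R) (N k J : nat) : Prop :=
  (1 <= J <= k)%nat /\ Jcond W N k J /\
  (forall j, (1 <= j < J)%nat -> ~ Jcond W N k j).

From Stdlib Require Import Reals Lra Lia.
Open Scope R_scope.

(* By the mean value theorem, the increments of an inverse S-shaped W over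
   three consecutive intervals of equal width have the middle one strictly
   smaller than one of its neighbours, because W' first decreases and then
   increases.  Hence the sequence h_j = h^+_{j,k} has no weak interior maximum:
   once h_{j+2} < h_{j+1}, it strictly decreases on the whole range 1..j+2.
   If j h_{j+1} >= h_1 + ... + h_j but the inequality fails at j+1, then
   h_{j+2} < h_{j+1}, so h_1 > ... > h_{j+1} and h_1 + ... + h_j > j h_{j+1},
   a contradiction.  So the inequality propagates from J_k up to k-1. *)

(* Stdlib's MVT needs continuity on a full neighbourhood of the endpoints,
   while the derivative of f is only one-sided at 0 and 1; f o clamp01 agrees
   with f on [0,1] and is continuous on all of R. *)
Definition clamp01 (x : R) : R := Rmax 0 (Rmin 1 x).

Lemma clamp01_in (x : R) : 0 <= clamp01 x <= 1.
Proof. unfold clamp01, Rmax, Rmin; repeat destruct Rle_dec; lra. Qed.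

Lemma clamp01_id (x : R) : 0 <= x <= 1 -> clamp01 x = x.
Proof. intros; unfold clamp01, Rmax, Rmin; repeat destruct Rle_dec; lra. Qed.

Lemma clamp01_dist (x c : R) : 0 <= c <= 1 -> Rabs (clamp01 x - c) <= Rabs (x - c).
Proof.
  intros; unfold clamp01, Rmax, Rmin; repeat destruct Rle_dec;
    unfold Rabs; repeat destruct Rcase_abs; lra.
Qed.

Lemma has_deriv_on01_continuous_on01 (f df : R -> R) :
  has_deriv_on01 f df -> continuous_on01 f.
Proof.
  intros Hd x Hx eps Heps.
  destruct (Hd x Hx 1 Rlt_0_1) as [alp [Halp Hquot]].
  set (M := Rabs (df x) + 1).
  assert (HM : 0 < M) by (unfold M; pose proof (Rabs_pos (df x)); lra).
  exists (Rmin alp (eps / M)); split.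
  { apply Rmin_pos; [lra | apply Rdiv_lt_0_compat; lra]. }
  intros y [Hy Hyx]; simpl in *; unfold R_dist in *.
  pose proof (Rmin_l alp (eps / M)); pose proof (Rmin_r alp (eps / M)).
  destruct (Req_dec y x) as [-> | Hne].
  { unfold Rminus; rewrite Rplus_opp_r, Rabs_R0; lra. }
  assert (Hq : Rabs ((f y - f x) / (y - x) - df x) < 1)
    by (apply Hquot; split; [split |]; lra).
  assert (Hslope : Rabs ((f y - f x) / (y - x)) <= M).
  { pose proof (Rabs_triang_inv ((f y - f x) / (y - x)) (df x)); unfold M; lra. }
  replace (f y - f x) with ((f y - f x) / (y - x) * (y - x)) by (field; lra).
  rewrite Rabs_mult.
  apply Rle_lt_trans with (M * Rabs (y - x)).
  { apply Rmult_le_compat_r; [apply Rabs_pos | exact Hslope]. }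
  replace eps with (M * (eps / M)) by (field; lra).
  apply Rmult_lt_compat_l; lra.
Qed.

Lemma continuous_on01_clamp01 (f : R -> R) (c : R) :
  continuous_on01 f -> 0 <= c <= 1 -> continuity_pt (fun x => f (clamp01 x)) c.
Proof.
  intros Hf Hc eps Heps.
  destruct (Hf c Hc eps Heps) as [alp [Halp Hnear]].
  exists alp; split; [exact Halp |].
  intros x [_ Hx]; simpl in *; unfold R_dist in *.
  rewrite (clamp01_id c Hc).
  apply Hnear; split; [apply clamp01_in |].
  pose proof (clamp01_dist x c Hc); lra.
Qed.

Lemma has_deriv_on01_clamp01 (f df : R -> R) (c : R) :
  has_deriv_on01 f df -> 0 < c < 1 ->
  derivable_pt_lim (fun x => f (clamp01 x)) c (df c).
Proof.
  intros Hd Hc eps Heps.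
  destruct (Hd c ltac:(lra) eps Heps) as [alp [Halp Hquot]].
  assert (Hdelta : 0 < Rmin alp (Rmin c (1 - c))) by (repeat apply Rmin_pos; lra).
  exists (mkposreal _ Hdelta); intros h Hh0 Hh; simpl in Hh.
  pose proof (Rmin_l alp (Rmin c (1 - c))); pose proof (Rmin_r alp (Rmin c (1 - c))).
  pose proof (Rmin_l c (1 - c)); pose proof (Rmin_r c (1 - c)).
  pose proof (Rle_abs h); pose proof (Rle_abs (- h)); rewrite Rabs_Ropp in *.
  rewrite (clamp01_id (c + h)), (clamp01_id c) by lra.
  replace h with (c + h - c) at 2 by ring.
  apply Hquot; split; [split; [split |] |]; simpl; unfold R_dist;
    replace (c + h - c) with h by ring; lra.
Qed.

Lemma mvt_on01 (f df : R -> R) (u v : R) :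
  has_deriv_on01 f df -> 0 <= u -> u < v -> v <= 1 ->
  exists c, u < c < v /\ f v - f u = df c * (v - u).
Proof.
  intros Hd Hu Huv Hv.
  assert (Hid : forall c, u < c < v -> derivable_pt id c)
    by (intros; apply derivable_pt_id).
  set (Hfc := fun c (P : u < c < v) =>
    exist (fun l => derivable_pt_abs (fun x => f (clamp01 x)) c l) (df c)
          (has_deriv_on01_clamp01 f df c Hd ltac:(lra))).
  destruct (MVT (fun x => f (clamp01 x)) id u v Hfc Hid Huv) as [c [P Hc]].
  - intros c Hc; apply continuous_on01_clamp01;
      [apply (has_deriv_on01_continuous_on01 f df Hd) | lra].
  - intros c Hc; apply derivable_continuous_pt, derivable_pt_id.
  - exists c; split; [exact P |].
    rewrite (derive_pt_eq_0 id c 1 (Hid c P) (derivable_pt_lim_id c)) in Hc.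
    unfold derive_pt, Hfc, id in Hc; simpl in Hc.
    rewrite !clamp01_id in Hc by lra; lra.
Qed.

Lemma inverse_S_shaped_increment_no_max (f : R -> R) (x d : R) :
  inverse_S_shaped f -> 0 <= x - d -> 0 < d -> x + 2 * d <= 1 ->
  f (x + d) - f x < f x - f (x - d) \/
  f (x + d) - f x < f (x + 2 * d) - f (x + d).
Proof.
  intros [_ [df [Hd [_ [x0 [_ [Hdec Hinc]]]]]]] Hlo Hdpos Hhi.
  destruct (mvt_on01 f df (x - d) x Hd) as [cl [Hcl El]]; try lra.
  destruct (mvt_on01 f df x (x + d) Hd) as [cm [Hcm Em]]; try lra.
  destruct (mvt_on01 f df (x + d) (x + 2 * d) Hd) as [cr [Hcr Er]]; try lra.
  rewrite El, Em, Er.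
  replace (x - (x - d)) with d by ring; replace (x + d - x) with d by ring;
    replace (x + 2 * d - (x + d)) with d by ring.
  destruct (Rle_dec cm x0).
  - left; apply Rmult_lt_compat_r; [lra | apply Hdec; lra].
  - right; apply Rmult_lt_compat_r; [lra | apply Hinc; lra].
Qed.

Lemma sum1_gt_of_decreasing (h : nat -> R) (j : nat) : (1 <= j)%nat ->
  (forall i, (1 <= i <= j)%nat -> h (S i) < h i) ->
  INR j * h (S j) < sum1 h j.
Proof.
  induction j as [| j IH]; intros Hj Hdec; [lia |].
  simpl sum1; rewrite S_INR.
  assert (Hlast : h (S (S j)) < h (S j)) by (apply Hdec; lia).
  destruct j as [| j].
  - simpl; lra.
  - assert (Hprev : INR (S j) * h (S (S j)) < sum1 h (S j))
      by (apply IH; [lia | intros i Hi; apply Hdec; lia]).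
    pose proof (pos_INR (S j)); nra.
Qed.

Section JcondPersistence.

Variables (h : nat -> R) (k : nat).

Hypothesis no_weak_local_max : forall i, (1 <= i)%nat -> (i + 2 <= k)%nat ->
  h (S i) < h (S (S i)) \/ h (S i) < h i.

Lemma descent_propagates_back (j : nat) :
  (j + 2 <= k)%nat -> h (S (S j)) < h (S j) ->
  forall i, (1 <= i <= S j)%nat -> h (S i) < h i.
Proof.
  intros Hjk Hdesc i Hi.
  remember (S j - i)%nat as t eqn:Ht.
  revert i Hi Ht; induction t as [| t IH]; intros i Hi Ht.
  - replace i with (S j) by lia; exact Hdesc.
  - assert (Hnext : h (S (S i)) < h (S i)) by (apply IH; lia).
    pose proof (no_weak_local_max i ltac:(lia) ltac:(lia)); lra.
Qed.

Lemma Jcond_step (j : nat) : (1 <= j)%nat -> (j + 2 <= k)%nat ->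
  INR j * h (S j) >= sum1 h j -> INR (S j) * h (S (S j)) >= sum1 h (S j).
Proof.
  intros Hj Hjk Hcond; simpl sum1; rewrite S_INR.
  destruct (Rlt_dec (h (S (S j))) (h (S j))) as [Hdesc | Hasc].
  - assert (Hsum : INR j * h (S j) < sum1 h j).
    { apply sum1_gt_of_decreasing; [exact Hj |].
      intros i Hi; apply (descent_propagates_back j); [lia | exact Hdesc | lia]. }
    lra.
  - pose proof (pos_INR j); nra.
Qed.

Lemma Jcond_persists (j0 : nat) : (1 <= j0)%nat -> INR j0 * h (S j0) >= sum1 h j0 ->
  forall j, (j0 <= j <= k - 1)%nat -> INR j * h (S j) >= sum1 h j.
Proof.
  intros Hj0 Hcond j; induction j as [| j IH]; intros Hj; [lia |].
  destruct (Nat.eq_dec j0 (S j)) as [<- | Hne]; [exact Hcond |].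
  apply Jcond_step; [lia | lia | apply IH; lia].
Qed.

End JcondPersistence.

Lemma hplus_no_weak_local_max (W : R -> R) (N k : nat) :
  inverse_S_shaped W -> (k <= N)%nat ->
  forall i, (1 <= i)%nat -> (i + 2 <= k)%nat ->
    hplus W N k (S i) < hplus W N k (S (S i)) \/
    hplus W N k (S i) < hplus W N k i.
Proof.
  intros HW HkN i Hi Hik.
  assert (Hi1 : 1 <= INR i) by (apply (le_INR 1); lia).
  assert (Hik' : INR i + 2 <= INR k)
    by (replace 2 with (INR 2) by (simpl; ring); rewrite <- plus_INR; apply le_INR; lia).
  assert (HkN' : INR k <= INR N) by (apply le_INR; exact HkN).
  set (x := (INR k - INR i - 1) / INR N); set (d := / INR N).
  assert (Hleft : hplus W N k (S (S i)) = W x - W (x - d)).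
  { unfold hplus, x, d; rewrite !S_INR; f_equal; f_equal; field; lra. }
  assert (Hmid : hplus W N k (S i) = W (x + d) - W x).
  { unfold hplus, x, d; rewrite !S_INR; f_equal; f_equal; field; lra. }
  assert (Hright : hplus W N k i = W (x + 2 * d) - W (x + d)).
  { unfold hplus, x, d; f_equal; f_equal; field; lra. }
  rewrite Hleft, Hmid, Hright.
  apply inverse_S_shaped_increment_no_max; [exact HW | | |];
    unfold x, d; [| apply Rinv_0_lt_compat; lra |];
    apply (Rmult_le_reg_r (INR N)); try lra; field_simplify; lra.
Qed.

Theorem lemma5 (N : nat) (W : R -> R)
  (HW : inverse_S_shaped W) (HWr : forall x, 0 <= x <= 1 -> 0 <= W x <= 1)
  (HW0 : W 0 = 0) (HW1 : W 1 = 1)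
  (k : nat) (Hk : (2 <= k <= N)%nat)
  (J : nat) (HJ : is_Jk W N k J) (HJk : (J <= k - 1)%nat) :
  forall j : nat, (J <= j <= k - 1)%nat ->
    INR j * hplus W N k (S j) >= sum1 (hplus W N k) j.
Proof.
  destruct HJ as [[HJ1 _] [[HJeq | HJcond] _]]; [lia |].
  apply Jcond_persists; [| exact HJ1 | exact HJcond].
  apply hplus_no_weak_local_max; [exact HW | lia].
Qed.
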